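(* Let $\mathbf{c}\in\mathbb{R}^n_{\ge0}$, $0<r\le1$ with $\|\mathbf{c}\|_1\le r$, let $0<\delta\le1$ and $M=\lceil 4n^2\delta^{-1}\rceil$. Then $$\Psi_n(1,r)\le G_n(1,r)\le(1+\delta)\Psi_n(1,r).$$
   Context: Given $\mathbf{c}=(c_1,\dots,c_n)$, define $\Psi_0(u,v)=1$ if $u\ge0$ and $v\ge0$, and $0$ otherwise, and for $i=1,\dots,n$, $\Psi_i(u,v)=\int_{-1}^1\Psi_{i-1}(u-|s|,\,v-|s-c_i|)\,ds$. Given additionally $r>0$ and a positive integer $M$, define $G_0=\Psi_0$ and, inductively for $i=1,\dots,n$: $\overline G_i(u,v)=\int_{-1}^1G_{i-1}(u-|s|,\,v-|s-c_i|)\,ds$, and $G_i(u,v)=\overline G_i\big(\tfrac1M\lceil Mu\rceil,\ \tfrac rM\lceil \tfrac Mr v\rceil\big)$ if $u>0$ and $v>0$, while $G_i(u,v)=0$ otherwise (a staircase approximation of $\overline G_i$ on the grid $\tfrac1M\mathbb{Z}\times\tfrac rM\mathbb{Z}$). *)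

From Stdlib Require Import Reals Lra ZArith ClassicalEpsilon.
Open Scope R_scope.

(* Integral over [a,b]: the Riemann integral (independent of the
   integrability proof); chosen by Hilbert epsilon, it agrees with
   RiemannInt whenever f is Riemann integrable on [a,b]. All integrands
   arising below are Riemann integrable (piecewise monotone / step). *)
Definition Rint (f : R -> R) (a b : R) : R :=
  epsilon (inhabits 0)
    (fun I => exists pr : Riemann_integrable f a b, RiemannInt pr = I).

Definition Rfloor (x : R) : Z := Int_part x.
Definition Rceil (x : R) : Z := (- Rfloor (- x))%Z.

(* c is 1-indexed: c 1, ..., c n are used. *)
Definition Psi0 (u v : R) : R :=
  if Rle_dec 0 u then (if Rle_dec 0 v then 1 else 0) else 0.

Fixpoint Psi (c : nat -> R) (i : nat) : R -> R -> R :=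
  match i with
  | O => Psi0
  | S k => fun u v =>
      Rint (fun s => Psi c k (u - Rabs s) (v - Rabs (s - c (S k)))) (-1) 1
  end.

(* staircase approximation on the grid (1/M)Z x (r/M)Z *)
Fixpoint G (c : nat -> R) (r : R) (M : nat) (i : nat) : R -> R -> R :=
  match i with
  | O => Psi0
  | S k => fun u v =>
      let Gbar := fun u' v' =>
        Rint (fun s => G c r M k (u' - Rabs s) (v' - Rabs (s - c (S k)))) (-1) 1 in
      if Rlt_dec 0 u then
        if Rlt_dec 0 v then
          Gbar (/ INR M * IZR (Rceil (INR M * u)))
               (r / INR M * IZR (Rceil (INR M / r * v)))
        else 0
      else 0
  end.

Fixpoint l1norm (c : nat -> R) (n : nat) : R :=
  match n with
  | O => 0
  | S m => l1norm c m + Rabs (c (S m))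
  end.

(* Rounding the arguments up to the grid only increases the monotone integrands, which gives
   Psi_n <= G_n.  Conversely each of the n roundings moves the arguments by at most 1/M and
   r/M, so G_n(1, r) <= Psi_n((1+e) 1, (1+e) r) with e = n/M.  The substitution
   s = mu y + (1 - mu) c_i / 2 in each of the n integrals, with mu = 1 + 2e, gives
   Psi_n(x, y) <= mu^n Psi_n(x/mu + h, y/mu + h) with h = ||c||_1 (1 - 1/mu) / 2, and as
   ||c||_1 <= r <= 1 the new arguments are at most 1 and r.  Finally
   mu^n <= 1 + 4 n^2 / M <= 1 + delta.  Integrability: Psi_k is Lipschitz for k >= 1, and
   the integrands of G are step functions. *)

From Stdlib Require Import Reals ZArith Lra Lia ClassicalEpsilon Classical.
From Coquelicot Require Import Coquelicot.
Open Scope R_scope.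
Set Bullet Behavior "Strict Subproofs".

Lemma Rint_RInt (f : R -> R) a b : ex_RInt f a b -> Rint f a b = RInt f a b :> R.
Proof.
  intros H. unfold Rint.
  assert (Hex : exists I, exists pr : Riemann_integrable f a b, RiemannInt pr = I).
  { exists (RiemannInt (ex_RInt_Reals_0 f a b H)). eexists; reflexivity. }
  destruct (epsilon_spec (inhabits 0) _ Hex) as [pr Hpr].
  rewrite <- Hpr. symmetry. apply RInt_Reals.
Qed.

Lemma Rceil_bounds x : IZR (Rceil x) - 1 < x <= IZR (Rceil x).
Proof.
  unfold Rceil, Rfloor, Int_part. rewrite opp_IZR, minus_IZR.
  destruct (archimed (-x)) as [H1 H2]. lra.
Qed.

Lemma Rceil_unique x k : IZR k - 1 < x <= IZR k -> Rceil x = k.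
Proof.
  intros [H1 H2]. unfold Rceil, Rfloor, Int_part.
  assert (E : (- k + 1)%Z = up (- x)).
  { apply tech_up; rewrite plus_IZR, opp_IZR; simpl; lra. }
  rewrite <- E. lia.
Qed.

Lemma Rceil_le x y : x <= y -> (Rceil x <= Rceil y)%Z.
Proof.
  intros H. destruct (Rceil_bounds x), (Rceil_bounds y).
  destruct (Z_le_gt_dec (Rceil x) (Rceil y)) as [h|h]; auto.
  assert (IZR (Rceil y) <= IZR (Rceil x) - 1).
  { rewrite <- minus_IZR. apply IZR_le. lia. }
  lra.
Qed.

Lemma Rceil_pos_iff x : (0 < Rceil x)%Z <-> 0 < x.
Proof.
  destruct (Rceil_bounds x) as [h1 h2]. split; intro H.
  - destruct (Rle_lt_dec x 0); [|lra].
    assert (Rceil x < 1)%Z by (apply lt_IZR; lra). lia.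
  - apply lt_IZR. lra.
Qed.

Lemma le_INR_Z_to_nat_Rceil x : x <= INR (Z.to_nat (Rceil x)).
Proof.
  destruct (Rceil_bounds x) as [_ Hx].
  destruct (Z_le_gt_dec 0 (Rceil x)) as [H|H].
  - rewrite INR_IZR_INZ, Z2Nat.id by exact H. exact Hx.
  - replace (Z.to_nat (Rceil x)) with 0%nat by (destruct (Rceil x); [reflexivity|lia|reflexivity]).
    apply Rle_trans with (IZR (Rceil x)); [exact Hx|].
    apply IZR_le. lia.
Qed.

Lemma Rceil_grid_bounds a x : 0 < a -> x <= / a * IZR (Rceil (a * x)) <= x + / a.
Proof.
  intros Ha. destruct (Rceil_bounds (a * x)) as [h1 h2].
  split; apply Rmult_le_reg_l with a; auto;
    rewrite <- Rmult_assoc, Rinv_r by lra; [lra|].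
  rewrite Rmult_plus_distr_l, Rinv_r by lra. lra.
Qed.

Lemma Rceil_grid_le a x x' : 0 < a -> x <= x' ->
  / a * IZR (Rceil (a * x)) <= / a * IZR (Rceil (a * x')).
Proof.
  intros Ha H. apply Rmult_le_compat_l; [left; apply Rinv_0_lt_compat; exact Ha|].
  apply IZR_le, Rceil_le, Rmult_le_compat_l; lra.
Qed.

Definition pwc_at {T : Type} (f : R -> T) (x : R) : Prop :=
  exists e, 0 < e /\ exists l r : T,
    (forall y, x - e < y < x -> f y = l) /\ (forall y, x < y < x + e -> f y = r).

Lemma pwc_at_factor {T U : Type} (f : R -> T) (g : R -> U) x :
  pwc_at f x -> (forall y z, f y = f z -> g y = g z) -> pwc_at g x.
Proof.
  intros [e [He [l [r [Hl Hr]]]]] Hg. exists e. split; [exact He|].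
  exists (g (x - e / 2)), (g (x + e / 2)). split; intros y Hy; apply Hg.
  - rewrite (Hl y), (Hl (x - e / 2)); auto; lra.
  - rewrite (Hr y), (Hr (x + e / 2)); auto; lra.
Qed.

Lemma pwc_at_glue {T : Type} (f f1 f2 : R -> T) x e : 0 < e ->
  (forall y, x - e < y < x -> f y = f1 y) -> (forall y, x < y < x + e -> f y = f2 y) ->
  pwc_at f1 x -> pwc_at f2 x -> pwc_at f x.
Proof.
  intros He E1 E2 [e1 [He1 [l1 [_ [Hl _]]]]] [e2 [He2 [_ [r2 [_ Hr]]]]].
  set (e' := Rmin e (Rmin e1 e2)).
  assert (Hm : 0 < e' /\ e' <= e /\ e' <= e1 /\ e' <= e2)
    by (unfold e', Rmin; repeat destruct Rle_dec; lra).
  exists e'. split; [lra|]. exists l1, r2. split; intros y Hy.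
  - rewrite E1 by lra. apply Hl. lra.
  - rewrite E2 by lra. apply Hr. lra.
Qed.

Lemma pwc_at_pair {T U : Type} (f : R -> T) (g : R -> U) x :
  pwc_at f x -> pwc_at g x -> pwc_at (fun y => (f y, g y)) x.
Proof.
  intros [e1 [He1 [l1 [r1 [Hl1 Hr1]]]]] [e2 [He2 [l2 [r2 [Hl2 Hr2]]]]].
  set (e := Rmin e1 e2).
  assert (Hm : 0 < e /\ e <= e1 /\ e <= e2) by (unfold e, Rmin; destruct Rle_dec; lra).
  exists e. split; [lra|]. exists (l1, l2), (r1, r2).
  split; intros y Hy; f_equal; [apply Hl1|apply Hl2|apply Hr1|apply Hr2]; lra.
Qed.

Lemma pwc_at_Rceil x : pwc_at Rceil x.
Proof.
  destruct (Rceil_bounds x) as [h1 h2].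
  set (k := Rceil x) in *.
  destruct (Req_dec x (IZR k)) as [Ex|Ex].
  - exists (Rmin 1 (x - IZR k + 1)).
    assert (Hm : 0 < Rmin 1 (x - IZR k + 1) <= 1 /\ Rmin 1 (x - IZR k + 1) <= x - IZR k + 1)
      by (unfold Rmin; destruct Rle_dec; lra).
    split; [lra|]. exists k, (k + 1)%Z. split; intros y Hy; apply Rceil_unique.
    + lra.
    + rewrite plus_IZR. lra.
  - exists (Rmin (IZR k - x) (x - IZR k + 1)).
    assert (Hm : 0 < Rmin (IZR k - x) (x - IZR k + 1) /\ Rmin (IZR k - x) (x - IZR k + 1) <= IZR k - x
      /\ Rmin (IZR k - x) (x - IZR k + 1) <= x - IZR k + 1)
      by (unfold Rmin; destruct Rle_dec; lra).
    split; [lra|]. exists k, k. split; intros y Hy; apply Rceil_unique; lra.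
Qed.

Lemma pwc_at_comp_affine {T : Type} (f : R -> T) a b x :
  pwc_at f (a + b * x) -> pwc_at (fun y => f (a + b * y)) x.
Proof.
  intros [e [He [l [r [Hl Hr]]]]].
  destruct (Req_dec b 0) as [->|Hb].
  { exists 1. split; [lra|]. exists (f (a + 0 * x)), (f (a + 0 * x)).
    split; intros y _; f_equal; ring. }
  assert (Hb' : 0 < Rabs b) by (apply Rabs_pos_lt; exact Hb).
  exists (e / Rabs b). split; [apply Rdiv_lt_0_compat; lra|].
  assert (Hclose : forall y, Rabs (y - x) < e / Rabs b -> Rabs (b * y - b * x) < e).
  { intros y Hy. rewrite <- Rmult_minus_distr_l, Rabs_mult.
    apply Rmult_lt_compat_l with (r := Rabs b) in Hy; [|exact Hb'].
    replace (Rabs b * (e / Rabs b)) with e in Hy by (field; lra). exact Hy. }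
  assert (Hnear : forall y, x - e / Rabs b < y < x + e / Rabs b -> - e < b * y - b * x < e).
  { intros y Hy. destruct (Rabs_def2 _ _ (Hclose y ltac:(apply Rabs_def1; lra))). lra. }
  destruct (Rlt_dec 0 b) as [Hpos|Hneg].
  - exists l, r. split; intros y Hy; specialize (Hnear y ltac:(lra)).
    + apply Hl. assert (b * y < b * x) by (apply Rmult_lt_compat_l; lra). lra.
    + apply Hr. assert (b * x < b * y) by (apply Rmult_lt_compat_l; lra). lra.
  - exists r, l. split; intros y Hy; specialize (Hnear y ltac:(lra)).
    + apply Hr. assert (- b * y < - b * x) by (apply Rmult_lt_compat_l; lra). lra.
    + apply Hl. assert (- b * x < - b * y) by (apply Rmult_lt_compat_l; lra). lra.
Qed.

Lemma pwc_at_Rceil_tent a p c0 x : pwc_at (fun s => Rceil (a * (p - Rabs (s - c0)))) x.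
Proof.
  set (f1 := fun s => Rceil ((a * p - a * c0) + a * s)).
  set (f2 := fun s => Rceil ((a * p + a * c0) + - a * s)).
  assert (P1 : pwc_at f1 x) by apply (pwc_at_comp_affine Rceil), pwc_at_Rceil.
  assert (P2 : pwc_at f2 x) by apply (pwc_at_comp_affine Rceil), pwc_at_Rceil.
  assert (E1 : forall s, s <= c0 -> Rceil (a * (p - Rabs (s - c0))) = f1 s).
  { intros s Hs. unfold f1. rewrite Rabs_left1 by lra. f_equal. ring. }
  assert (E2 : forall s, c0 <= s -> Rceil (a * (p - Rabs (s - c0))) = f2 s).
  { intros s Hs. unfold f2. rewrite Rabs_right by lra. f_equal. ring. }
  destruct (Rtotal_order x c0) as [H|[H|H]].
  - apply (pwc_at_glue _ f1 f1 x (c0 - x)); auto; [lra| |]; intros; apply E1; lra.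
  - apply (pwc_at_glue _ f1 f2 x 1); auto; [lra| |]; intros; [apply E1|apply E2]; lra.
  - apply (pwc_at_glue _ f2 f2 x (x - c0)); auto; [lra| |]; intros; apply E2; lra.
Qed.

Lemma ex_RInt_const_on (f : R -> R) a b k :
  (forall x, Rmin a b < x < Rmax a b -> f x = k) -> ex_RInt f a b.
Proof.
  intros H. apply ex_RInt_ext with (fun _ => k); [intros; symmetry; auto|apply ex_RInt_const].
Qed.

Lemma RInt_const_on (f : R -> R) a b k :
  (forall x, Rmin a b < x < Rmax a b -> f x = k) -> RInt f a b = (b - a) * k :> R.
Proof.
  intros H. rewrite (RInt_ext f (fun _ => k)) by auto. rewrite RInt_const. reflexivity.
Qed.

(* The supremum of the [t] such that [f] is integrable on [[a, t]] cannot lie below [b]. *)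
Lemma ex_RInt_pwc (f : R -> R) a b : a <= b ->
  (forall x, a <= x <= b -> pwc_at f x) -> ex_RInt f a b.
Proof.
  intros Hab Hloc.
  set (E := fun t => a <= t <= b /\ ex_RInt f a t).
  assert (HB : bound E) by (exists b; intros t [Ht _]; lra).
  assert (HE : exists x, E x) by (exists a; split; [lra|apply ex_RInt_point]).
  destruct (completeness E HB HE) as [s [Hub Hlub]].
  assert (Has : a <= s) by (apply Hub; split; [lra|apply ex_RInt_point]).
  assert (Hsb : s <= b) by (apply Hlub; intros t [Ht _]; lra).
  destruct (Hloc s (conj Has Hsb)) as [e [He [l [r [Hl Hr]]]]].
  assert (Hs : ex_RInt f a s).
  { destruct (Req_dec s a) as [->|Hne]; [apply ex_RInt_point|].
    set (e' := Rmin e (s - a)).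
    assert (He' : 0 < e' /\ e' <= e /\ e' <= s - a) by (unfold e', Rmin; destruct Rle_dec; lra).
    assert (Hex : exists t, E t /\ s - e' < t).
    { apply NNPP; intro Hn.
      assert (s <= s - e'); [|lra].
      apply Hlub. intros t Ht. destruct (Rle_lt_dec t (s - e')); auto.
      exfalso; apply Hn; exists t; auto. }
    destruct Hex as [t [[Ht1 Ht2] Ht3]].
    assert (Hts : t <= s) by (apply Hub; split; auto).
    destruct (Req_dec t s) as [<-|Hts']; auto.
    apply ex_RInt_Chasles_0 with t; [lra|auto|].
    apply ex_RInt_const_on with l.
    intros x Hx; rewrite Rmin_left, Rmax_right in Hx by lra. apply Hl; lra. }
  destruct (Req_dec s b) as [<-|Hne]; auto.
  exfalso.
  set (t := Rmin (s + e / 2) b).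
  assert (Ht : s < t /\ t <= b /\ t <= s + e / 2) by (unfold t, Rmin; destruct Rle_dec; lra).
  assert (E t).
  { split; [lra|]. apply ex_RInt_Chasles_0 with s; [lra|auto|].
    apply ex_RInt_const_on with r.
    intros x Hx; rewrite Rmin_left, Rmax_right in Hx by lra. apply Hr; lra. }
  assert (t <= s) by (apply Hub; auto). lra.
Qed.

Lemma ex_RInt_of_le (f : R -> R) :
  (forall a b, a <= b -> ex_RInt f a b) -> forall a b, ex_RInt f a b.
Proof.
  intros H a b. destruct (Rle_dec a b); [auto|]. apply ex_RInt_swap, H. lra.
Qed.

Definition ind_Icc (lo hi s : R) : R :=
  if Rle_dec lo s then if Rle_dec s hi then 1 else 0 else 0.

Lemma RInt_ind_Icc lo hi a b : a <= b ->
  ex_RInt (ind_Icc lo hi) a b /\ RInt (ind_Icc lo hi) a b = Rmax 0 (Rmin hi b - Rmax lo a) :> R.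
Proof.
  intros Hab. set (l := Rmax lo a). set (h := Rmin hi b).
  assert (Hl : a <= l /\ lo <= l /\ (l = lo \/ l = a)) by (unfold l, Rmax; destruct Rle_dec; lra).
  assert (Hh : h <= b /\ h <= hi /\ (h = hi \/ h = b)) by (unfold h, Rmin; destruct Rle_dec; lra).
  assert (Hvalue : forall x y k, x <= y -> (forall s, x < s < y -> ind_Icc lo hi s = k) ->
    ex_RInt (ind_Icc lo hi) x y /\ RInt (ind_Icc lo hi) x y = (y - x) * k :> R).
  { intros x y k Hxy Hk.
    assert (Hk' : forall s, Rmin x y < s < Rmax x y -> ind_Icc lo hi s = k)
      by (rewrite Rmin_left, Rmax_right by lra; exact Hk).
    split; [apply (ex_RInt_const_on _ _ _ k)|apply RInt_const_on]; exact Hk'. }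
  assert (Hout : forall s, a < s < b -> s < l \/ h < s -> ind_Icc lo hi s = 0).
  { intros s Hs Hs'. unfold ind_Icc. do 2 (destruct Rle_dec; auto).
    exfalso. destruct Hl as [_ [_ [El|El]]], Hh as [_ [_ [Eh|Eh]]]; lra. }
  destruct (Rlt_le_dec h l) as [Hlt|Hle].
  - destruct (Hvalue a b 0 Hab ltac:(intros; apply Hout; lra)) as [I V].
    split; [exact I|]. rewrite V, Rmax_left by lra. ring.
  - destruct (Hvalue a l 0 ltac:(lra) ltac:(intros; apply Hout; lra)) as [I1 V1].
    destruct (Hvalue l h 1 Hle) as [I2 V2].
    { intros s Hs. unfold ind_Icc. do 2 (destruct Rle_dec; [|exfalso; lra]). reflexivity. }
    destruct (Hvalue h b 0 ltac:(lra) ltac:(intros; apply Hout; lra)) as [I3 V3].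
    assert (I12 : ex_RInt (ind_Icc lo hi) a h) by (apply ex_RInt_Chasles with l; auto).
    split; [apply ex_RInt_Chasles with h; auto|].
    rewrite <- (RInt_Chasles _ a h b), <- (RInt_Chasles _ a l h) by auto.
    simpl. rewrite V1, V2, V3, Rmax_right by lra. unfold plus; simpl. ring.
Qed.

Lemma Psi0_tent_ind U V c0 s :
  Psi0 (U - Rabs s) (V - Rabs (s - c0)) = ind_Icc (Rmax (-U) (c0 - V)) (Rmin U (c0 + V)) s.
Proof.
  unfold Psi0, ind_Icc, Rmax, Rmin.
  destruct (Rle_dec (-U) (c0 - V)); destruct (Rle_dec U (c0 + V));
  unfold Rabs; destruct (Rcase_abs s); destruct (Rcase_abs (s - c0));
  repeat destruct Rle_dec; lra.
Qed.

Lemma ex_RInt_Psi0 U V c0 a b : ex_RInt (fun s => Psi0 (U - Rabs s) (V - Rabs (s - c0))) a b.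
Proof.
  revert a b. apply ex_RInt_of_le. intros a b Hab.
  apply ex_RInt_ext with (ind_Icc (Rmax (-U) (c0 - V)) (Rmin U (c0 + V))).
  - intros; rewrite Psi0_tent_ind; reflexivity.
  - apply RInt_ind_Icc; exact Hab.
Qed.

Lemma Psi_S c k u v :
  Psi c (S k) u v = Rint (fun s => Psi c k (u - Rabs s) (v - Rabs (s - c (S k)))) (-1) 1.
Proof. reflexivity. Qed.

Lemma Psi_1 c u v : Psi c 1 u v =
  Rmax 0 (Rmin (Rmin u (c 1%nat + v)) 1 - Rmax (Rmax (-u) (c 1%nat - v)) (-1)).
Proof.
  rewrite Psi_S, Rint_RInt by apply ex_RInt_Psi0.
  rewrite (RInt_ext _ (ind_Icc (Rmax (-u) (c 1%nat - v)) (Rmin u (c 1%nat + v))))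
    by (intros; apply Psi0_tent_ind).
  apply RInt_ind_Icc. lra.
Qed.

Definition lipschitz2 (F : R -> R -> R) (L : R) : Prop :=
  forall u v u' v', Rabs (F u v - F u' v') <= L * (Rabs (u - u') + Rabs (v - v')).

Lemma Rmin_lipschitz a b a' b' : Rabs (Rmin a b - Rmin a' b') <= Rabs (a - a') + Rabs (b - b').
Proof. unfold Rmin; repeat destruct Rle_dec; unfold Rabs; repeat destruct Rcase_abs; lra. Qed.

Lemma Rmax_lipschitz a b a' b' : Rabs (Rmax a b - Rmax a' b') <= Rabs (a - a') + Rabs (b - b').
Proof. unfold Rmax; repeat destruct Rle_dec; unfold Rabs; repeat destruct Rcase_abs; lra. Qed.

Lemma Psi_1_lipschitz c : lipschitz2 (Psi c 1) 2.
Proof.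
  intros u v u' v'. rewrite !Psi_1.
  set (c0 := c 1%nat). set (d := Rabs (u - u') + Rabs (v - v')).
  assert (Hmin : Rabs (Rmin (Rmin u (c0 + v)) 1 - Rmin (Rmin u' (c0 + v')) 1) <= d).
  { eapply Rle_trans; [apply Rmin_lipschitz|]. rewrite Rminus_diag, Rabs_R0, Rplus_0_r.
    eapply Rle_trans; [apply Rmin_lipschitz|].
    replace (c0 + v - (c0 + v')) with (v - v') by ring. unfold d; lra. }
  assert (Hmax : Rabs (Rmax (Rmax (-u) (c0 - v)) (-1) - Rmax (Rmax (-u') (c0 - v')) (-1)) <= d).
  { eapply Rle_trans; [apply Rmax_lipschitz|]. rewrite Rminus_diag, Rabs_R0, Rplus_0_r.
    eapply Rle_trans; [apply Rmax_lipschitz|].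
    replace (c0 - v - (c0 - v')) with (- (v - v')) by ring.
    replace (- u - - u') with (- (u - u')) by ring. rewrite !Rabs_Ropp. unfold d; lra. }
  eapply Rle_trans; [apply Rmax_lipschitz|]. rewrite Rminus_diag, Rabs_R0, Rplus_0_l.
  assert (Htri : forall p q p' q' : R, Rabs (p - q - (p' - q')) <= Rabs (p - p') + Rabs (q - q')).
  { intros p q p' q'. replace (p - q - (p' - q')) with ((p - p') + - (q - q')) by ring.
    eapply Rle_trans; [apply Rabs_triang|]. rewrite Rabs_Ropp. lra. }
  eapply Rle_trans; [apply Htri|]. lra.
Qed.

Lemma ex_RInt_lipschitz2_tent F L U V c0 a b : 0 <= L -> lipschitz2 F L ->
  ex_RInt (fun s => F (U - Rabs s) (V - Rabs (s - c0))) a b.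
Proof.
  intros HL HF. apply (ex_RInt_continuous (V := R_CompleteNormedModule)). intros z _.
  apply continuity_pt_filterlim. intros eps Heps.
  exists (eps / (2 * L + 1)). split; [apply Rdiv_lt_0_compat; lra|].
  intros x [_ Hx]. simpl in *. unfold R_dist in *.
  eapply Rle_lt_trans; [apply HF|].
  replace (U - Rabs x - (U - Rabs z)) with (Rabs z - Rabs x) by ring.
  replace (V - Rabs (x - c0) - (V - Rabs (z - c0))) with (Rabs (z - c0) - Rabs (x - c0)) by ring.
  assert (H1 : Rabs (Rabs z - Rabs x) <= Rabs (x - z))
    by (rewrite (Rabs_minus_sym x z); apply Rabs_triang_inv2).
  assert (H2 : Rabs (Rabs (z - c0) - Rabs (x - c0)) <= Rabs (x - z)).
  { replace (x - z) with (- ((z - c0) - (x - c0))) by ring. rewrite Rabs_Ropp.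
    apply Rabs_triang_inv2. }
  assert (Hx' : Rabs (x - z) * (2 * L + 1) < eps).
  { apply Rmult_lt_reg_r with (/ (2 * L + 1)); [apply Rinv_0_lt_compat; lra|].
    rewrite Rmult_assoc, Rinv_r by lra. lra. }
  assert (0 <= Rabs (x - z)) by apply Rabs_pos.
  nra.
Qed.

Lemma Psi_lipschitz c k : lipschitz2 (Psi c (S k)) (2 ^ S k).
Proof.
  induction k as [|k IH]; [rewrite pow_1; apply Psi_1_lipschitz|].
  intros u v u' v'. rewrite !(Psi_S c (S k)).
  assert (HL : 0 <= 2 ^ S k) by (apply pow_le; lra).
  assert (Hint : forall U V, ex_RInt (fun s => Psi c (S k) (U - Rabs s) (V - Rabs (s - c (S (S k))))) (-1) 1)
    by (intros; apply ex_RInt_lipschitz2_tent with (2 ^ S k); auto).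
  rewrite !Rint_RInt by apply Hint.
  rewrite <- (RInt_minus (V := R_CompleteNormedModule)) by apply Hint.
  eapply Rle_trans.
  - apply abs_RInt_le_const with (M := 2 ^ S k * (Rabs (u - u') + Rabs (v - v'))); [lra| |].
    + apply (ex_RInt_minus (V := R_NormedModule)); apply Hint.
    + intros t _. eapply Rle_trans; [apply IH|]. right. do 3 f_equal; ring.
  - change (2 ^ S (S k)) with (2 * 2 ^ S k). lra.
Qed.

Lemma ex_RInt_Psi c k U V c0 a b : ex_RInt (fun s => Psi c k (U - Rabs s) (V - Rabs (s - c0))) a b.
Proof.
  destruct k as [|k]; [apply ex_RInt_Psi0|].
  apply ex_RInt_lipschitz2_tent with (2 ^ S k); [apply pow_le; lra|apply Psi_lipschitz].
Qed.

Lemma Psi_S_RInt c k u v :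
  Psi c (S k) u v = RInt (fun s => Psi c k (u - Rabs s) (v - Rabs (s - c (S k)))) (-1) 1.
Proof. apply Rint_RInt, ex_RInt_Psi. Qed.

Lemma Psi_nonneg c k u v : 0 <= Psi c k u v.
Proof.
  revert u v; induction k as [|k IH]; intros u v.
  - simpl. unfold Psi0. repeat destruct Rle_dec; lra.
  - rewrite Psi_S_RInt. apply RInt_ge_0; [lra|apply ex_RInt_Psi|]. intros; apply IH.
Qed.

Lemma Psi_le_compat c k u v u' v' : u <= u' -> v <= v' -> Psi c k u v <= Psi c k u' v'.
Proof.
  revert u v u' v'; induction k as [|k IH]; intros u v u' v' Hu Hv.
  - simpl. unfold Psi0. repeat destruct Rle_dec; lra.
  - rewrite !Psi_S_RInt. apply RInt_le; [lra|apply ex_RInt_Psi|apply ex_RInt_Psi|].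
    intros; apply IH; lra.
Qed.

Lemma Psi_S_eq_0 c k u v : u <= 0 \/ v <= 0 -> Psi c (S k) u v = 0.
Proof.
  revert u v; induction k as [|k IH]; intros u v H.
  - rewrite Psi_1. unfold Rmax, Rmin. destruct H; repeat destruct Rle_dec; lra.
  - rewrite Psi_S_RInt, (RInt_const_on _ _ _ 0); [ring|].
    intros t _. apply IH.
    assert (0 <= Rabs t) by apply Rabs_pos.
    assert (0 <= Rabs (t - c (S (S k)))) by apply Rabs_pos. lra.
Qed.

Lemma RInt_scal_R (g : R -> R) a b k : ex_RInt g a b -> RInt (fun y => k * g y) a b = k * RInt g a b :> R.
Proof. intros H. apply (RInt_scal g a b k H). Qed.

Lemma Rabs_le_add_abs t d : Rabs t <= Rabs (t + d) + Rabs d.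
Proof.
  pose proof (Rabs_triang_inv t (t + d)) as H.
  replace (t - (t + d)) with (- d) in H by ring. rewrite Rabs_Ropp in H. lra.
Qed.

(* Substituting [s = mu y + v0] maps [[-1, 1]] onto an interval containing [[-1, 1]]. *)
Lemma RInt_le_dilate (f g : R -> R) mu v0 : 1 <= mu -> Rabs v0 <= mu - 1 ->
  (forall a b, ex_RInt f a b) -> (forall s, 0 <= f s) -> ex_RInt g (-1) 1 ->
  (forall y, -1 <= y <= 1 -> f (mu * y + v0) <= g y) ->
  RInt f (-1) 1 <= mu * RInt g (-1) 1.
Proof.
  intros Hmu Hv0 Hf Hpos Hg Hfg.
  assert (Hv : - (mu - 1) <= v0 <= mu - 1) by (unfold Rabs in Hv0; destruct Rcase_abs; lra).
  set (h := fun y => f (mu * y + v0)).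
  set (sm := (-1 - v0) / mu). set (sp := (1 - v0) / mu).
  assert (Esm : mu * sm + v0 = -1) by (unfold sm; field; lra).
  assert (Esp : mu * sp + v0 = 1) by (unfold sp; field; lra).
  assert (Hsm : -1 <= sm) by (apply Rmult_le_reg_l with mu; lra).
  assert (Hsp : sp <= 1) by (apply Rmult_le_reg_l with mu; lra).
  assert (Hsmp : sm <= sp) by (apply Rmult_le_reg_l with mu; lra).
  assert (Hh : ex_RInt h sm sp).
  { apply (ex_RInt_ext (fun y => scal (/ mu) (scal mu (h y)))).
    - intros y _. change (/ mu * (mu * h y) = h y). field. lra.
    - apply (ex_RInt_scal (V := R_NormedModule)), (ex_RInt_comp_lin (V := R_NormedModule)), Hf. }
  assert (Hg1 : ex_RInt g (-1) sm) by (apply (ex_RInt_Chasles_1 (V := R_CompleteNormedModule) g (-1) sm 1); [lra|exact Hg]).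
  assert (Hg2 : ex_RInt g sm 1) by (apply (ex_RInt_Chasles_2 (V := R_CompleteNormedModule) g (-1) sm 1); [lra|exact Hg]).
  assert (Hg3 : ex_RInt g sm sp) by (apply (ex_RInt_Chasles_1 (V := R_CompleteNormedModule) g sm sp 1); [lra|exact Hg2]).
  assert (Hg4 : ex_RInt g sp 1) by (apply (ex_RInt_Chasles_2 (V := R_CompleteNormedModule) g sm sp 1); [lra|exact Hg2]).
  assert (Hg0 : forall a b, -1 <= a <= b -> b <= 1 -> ex_RInt g a b -> 0 <= RInt g a b).
  { intros a b Hab Hb Hint. apply RInt_ge_0; [lra|exact Hint|].
    intros y Hy. apply Rle_trans with (f (mu * y + v0)); [apply Hpos|apply Hfg; lra]. }
  replace (RInt f (-1) 1) with (mu * RInt h sm sp).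
  - apply Rmult_le_compat_l; [lra|].
    rewrite <- (RInt_Chasles g (-1) sm 1), <- (RInt_Chasles g sm sp 1) by auto.
    assert (RInt h sm sp <= RInt g sm sp) by (apply RInt_le; auto; intros; apply Hfg; lra).
    assert (0 <= RInt g (-1) sm) by (apply Hg0; auto; lra).
    assert (0 <= RInt g sp 1) by (apply Hg0; auto; lra).
    simpl; unfold plus; simpl. lra.
  - rewrite <- RInt_scal_R, <- Esm, <- Esp by exact Hh.
    apply (RInt_comp_lin (V := R_CompleteNormedModule)). rewrite Esm, Esp. apply Hf.
Qed.

Lemma Psi_le_dilate c k mu : 1 <= mu -> (forall i, (1 <= i <= k)%nat -> Rabs (c i) <= 2) ->
  forall U V, Psi c k U V <=
    mu ^ k * Psi c k (U / mu + l1norm c k / 2 * (1 - / mu)) (V / mu + l1norm c k / 2 * (1 - / mu)).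
Proof.
  intros Hmu. assert (Hmu0 : 0 < mu) by lra.
  set (w := 1 - / mu).
  assert (Hw : 0 <= w) by (unfold w; assert (/ mu <= 1) by (rewrite <- Rinv_1; apply Rinv_le_contravar; lra); lra).
  induction k as [|k IH]; intros Hc U V.
  - simpl. rewrite Rmult_1_l.
    replace (U / mu + 0 / 2 * w) with (U * / mu) by (field; lra).
    replace (V / mu + 0 / 2 * w) with (V * / mu) by (field; lra).
    assert (0 < / mu) by (apply Rinv_0_lt_compat; lra).
    unfold Psi0. repeat destruct Rle_dec; try lra; exfalso; nra.
  - specialize (IH (fun i Hi => Hc i ltac:(lia))).
    set (C := c (S k)). set (p := C / 2). set (v0 := (1 - mu) * p).
    assert (Hp : Rabs p = Rabs C / 2).
    { unfold p, Rdiv. rewrite Rabs_mult, Rabs_inv, (Rabs_pos_eq 2) by lra. reflexivity. }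
    assert (Hpw : Rabs (p * w) = Rabs p * w) by (rewrite Rabs_mult, (Rabs_pos_eq w) by lra; reflexivity).
    assert (Harg : forall X t t', Rabs t <= Rabs t' + Rabs p * w ->
      (X - mu * Rabs t') / mu + l1norm c k / 2 * w <= X / mu + l1norm c (S k) / 2 * w - Rabs t).
    { intros X t t' Ht. change (l1norm c (S k)) with (l1norm c k + Rabs C).
      replace ((X - mu * Rabs t') / mu) with (X / mu - Rabs t') by (field; lra).
      replace ((l1norm c k + Rabs C) / 2 * w) with (l1norm c k / 2 * w + Rabs p * w)
        by (rewrite Hp; field). lra. }
    rewrite !Psi_S_RInt. fold C.
    change (mu ^ S k) with (mu * mu ^ k). rewrite Rmult_assoc, <- RInt_scal_R by apply ex_RInt_Psi.
    apply (RInt_le_dilate _ _ mu v0); auto.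
    + assert (HC : Rabs C <= 2) by (apply Hc; lia).
      unfold v0. rewrite Rabs_mult, Hp, Rabs_left1 by lra. nra.
    + intros; apply ex_RInt_Psi.
    + intros; apply Psi_nonneg.
    + apply (ex_RInt_scal (V := R_NormedModule)), ex_RInt_Psi.
    + intros y _.
      (* Up to a shift by [p * w], the substitution scales both [|s|] and [|s - C|] by [mu]. *)
      assert (E1 : mu * y + v0 = mu * (y + - (p * w))) by (unfold v0, w; field; lra).
      assert (E2 : mu * y + v0 - C = mu * (y - C + p * w)) by (unfold v0, w, p; field; lra).
      rewrite E2, E1, !Rabs_mult, (Rabs_pos_eq mu) by lra.
      eapply Rle_trans; [apply IH|]. fold w.
      apply Rmult_le_compat_l; [apply pow_le; lra|].
      apply Psi_le_compat; apply Harg.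
      * rewrite <- Hpw, <- (Rabs_Ropp (p * w)). apply Rabs_le_add_abs.
      * rewrite <- Hpw. apply Rabs_le_add_abs.
Qed.

Lemma Psi_scale_le c n e x y : 0 <= e -> (forall i, (1 <= i <= n)%nat -> Rabs (c i) <= 2) ->
  l1norm c n <= x -> l1norm c n <= y ->
  Psi c n ((1 + e) * x) ((1 + e) * y) <= (1 + 2 * e) ^ n * Psi c n x y.
Proof.
  intros He Hc Hx Hy. set (mu := 1 + 2 * e). set (L := l1norm c n).
  assert (Harg : forall z, L <= z -> (1 + e) * z / mu + L / 2 * (1 - / mu) <= z).
  { intros z Hz.
    replace ((1 + e) * z / mu + L / 2 * (1 - / mu)) with (z - e * (z - L) / mu)
      by (unfold mu; field; lra).
    assert (0 <= e * (z - L) / mu) by (apply Rdiv_le_0_compat; [apply Rmult_le_pos|unfold mu]; lra).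
    lra. }
  eapply Rle_trans; [apply (Psi_le_dilate c n mu); [unfold mu; lra|exact Hc]|].
  apply Rmult_le_compat_l; [apply pow_le; unfold mu; lra|].
  apply Psi_le_compat; apply Harg; assumption.
Qed.

Definition Gbar c r M k x y :=
  Rint (fun s => G c r M k (x - Rabs s) (y - Rabs (s - c (S k)))) (-1) 1.

Lemma G_S c r M k x y : G c r M (S k) x y =
  if Rlt_dec 0 x then if Rlt_dec 0 y then
    Gbar c r M k (/ INR M * IZR (Rceil (INR M * x))) (r / INR M * IZR (Rceil (INR M / r * y)))
  else 0 else 0.
Proof. reflexivity. Qed.

Lemma G_S_eq_0 c r M k x y : x <= 0 \/ y <= 0 -> G c r M (S k) x y = 0.
Proof.
  intros H. rewrite G_S. destruct (Rlt_dec 0 x); [destruct (Rlt_dec 0 y)|]; lra.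
Qed.

Section Staircase.
Variables (c : nat -> R) (r : R) (M : nat).
Hypothesis HM : 0 < INR M.
Hypothesis Hr : 0 < r.

Let HMr : 0 < INR M / r.
Proof. apply Rdiv_lt_0_compat; assumption. Qed.

Let r_div_M : r / INR M = / (INR M / r).
Proof. field; lra. Qed.

Lemma G_S_Rceil_congr k x y x' y' :
  Rceil (INR M * x) = Rceil (INR M * x') -> Rceil (INR M / r * y) = Rceil (INR M / r * y') ->
  G c r M (S k) x y = G c r M (S k) x' y'.
Proof.
  intros Ex Ey. rewrite !G_S, Ex, Ey.
  assert (Hpos : forall a z, 0 < a -> (0 < z <-> (0 < Rceil (a * z))%Z)).
  { intros a z Ha. rewrite Rceil_pos_iff. split; intros; [nra|].
    destruct (Rle_lt_dec z 0); [nra|assumption]. }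
  assert (Px : 0 < x <-> 0 < x') by (rewrite (Hpos _ x HM), (Hpos _ x' HM), Ex; tauto).
  assert (Py : 0 < y <-> 0 < y') by (rewrite (Hpos _ y HMr), (Hpos _ y' HMr), Ey; tauto).
  destruct (Rlt_dec 0 x), (Rlt_dec 0 x'), (Rlt_dec 0 y), (Rlt_dec 0 y'); tauto.
Qed.

Lemma ex_RInt_G k U V c0 a b : ex_RInt (fun s => G c r M k (U - Rabs s) (V - Rabs (s - c0))) a b.
Proof.
  destruct k as [|k]; [apply ex_RInt_Psi0|].
  revert a b. apply ex_RInt_of_le. intros a b Hab. apply ex_RInt_pwc; [exact Hab|].
  intros x _.
  apply (pwc_at_factor (fun s => (Rceil (INR M * (U - Rabs (s - 0))), Rceil (INR M / r * (V - Rabs (s - c0)))))).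
  - apply pwc_at_pair; apply pwc_at_Rceil_tent.
  - intros s t E. injection E as Eu Ev. rewrite !Rminus_0_r in Eu.
    apply G_S_Rceil_congr; assumption.
Qed.

Lemma Gbar_RInt k x y :
  Gbar c r M k x y = RInt (fun s => G c r M k (x - Rabs s) (y - Rabs (s - c (S k)))) (-1) 1.
Proof. apply Rint_RInt, ex_RInt_G. Qed.

Lemma G_nonneg k x y : 0 <= G c r M k x y.
Proof.
  revert x y; induction k as [|k IH]; intros x y.
  - simpl. unfold Psi0. repeat destruct Rle_dec; lra.
  - rewrite G_S. destruct Rlt_dec; [destruct Rlt_dec|]; try lra.
    rewrite Gbar_RInt. apply RInt_ge_0; [lra|apply ex_RInt_G|]. intros; apply IH.
Qed.

Lemma G_le_compat k x y x' y' : x <= x' -> y <= y' -> G c r M k x y <= G c r M k x' y'.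
Proof.
  revert x y x' y'; induction k as [|k IH]; intros x y x' y' Hx Hy.
  - simpl. unfold Psi0. repeat destruct Rle_dec; lra.
  - destruct (Rle_lt_dec x 0); [rewrite G_S_eq_0 by auto; apply G_nonneg|].
    destruct (Rle_lt_dec y 0); [rewrite G_S_eq_0 by auto; apply G_nonneg|].
    rewrite !G_S. destruct (Rlt_dec 0 x); [|lra]. destruct (Rlt_dec 0 y); [|lra].
    destruct (Rlt_dec 0 x'); [|lra]. destruct (Rlt_dec 0 y'); [|lra].
    rewrite !Gbar_RInt. apply RInt_le; [lra|apply ex_RInt_G|apply ex_RInt_G|].
    intros t _. apply IH.
    + pose proof (Rceil_grid_le _ x x' HM Hx). lra.
    + rewrite r_div_M. pose proof (Rceil_grid_le _ y y' HMr Hy). lra.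
Qed.

Lemma Psi_le_G k x y : Psi c k x y <= G c r M k x y.
Proof.
  revert x y; induction k as [|k IH]; intros x y; [apply Rle_refl|].
  destruct (Rle_lt_dec x 0) as [hx|hx]; [rewrite Psi_S_eq_0 by auto; apply G_nonneg|].
  destruct (Rle_lt_dec y 0) as [hy|hy]; [rewrite Psi_S_eq_0 by auto; apply G_nonneg|].
  rewrite G_S. destruct (Rlt_dec 0 x); [|lra]. destruct (Rlt_dec 0 y); [|lra].
  rewrite Psi_S_RInt, Gbar_RInt.
  apply RInt_le; [lra|apply ex_RInt_Psi|apply ex_RInt_G|]. intros t _.
  eapply Rle_trans; [apply IH|]. apply G_le_compat.
  - pose proof (Rceil_grid_bounds _ x HM). lra.
  - rewrite r_div_M. pose proof (Rceil_grid_bounds _ y HMr). lra.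
Qed.

Lemma G_le_Psi_shift k x y : G c r M k x y <= Psi c k (x + INR k / INR M) (y + INR k * r / INR M).
Proof.
  revert x y; induction k as [|k IH]; intros x y.
  - simpl. rewrite Rdiv_0_l, Rmult_0_l, Rdiv_0_l, !Rplus_0_r. apply Rle_refl.
  - rewrite G_S. destruct (Rlt_dec 0 x); [|apply Psi_nonneg]. destruct (Rlt_dec 0 y); [|apply Psi_nonneg].
    rewrite Psi_S_RInt, Gbar_RInt.
    apply RInt_le; [lra|apply ex_RInt_G|apply ex_RInt_Psi|]. intros t _.
    eapply Rle_trans; [apply IH|]. apply Psi_le_compat; rewrite S_INR.
    + pose proof (Rceil_grid_bounds _ x HM).
      replace ((INR k + 1) / INR M) with (INR k / INR M + / INR M) by (field; lra). lra.
    + rewrite r_div_M. pose proof (Rceil_grid_bounds _ y HMr).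
      replace ((INR k + 1) * r / INR M) with (INR k * r / INR M + / (INR M / r)) by (field; lra). lra.
Qed.

End Staircase.

Lemma l1norm_nonneg c n : 0 <= l1norm c n.
Proof. induction n as [|n IH]; simpl; [lra|]. pose proof (Rabs_pos (c (S n))). lra. Qed.

Lemma Rabs_le_l1norm c n i : (1 <= i <= n)%nat -> Rabs (c i) <= l1norm c n.
Proof.
  induction n as [|n IH]; intros Hi; [lia|]. simpl.
  pose proof (Rabs_pos (c (S n))). pose proof (l1norm_nonneg c n).
  destruct (Nat.eq_dec i (S n)) as [->|Hne]; [lra|].
  assert (Rabs (c i) <= l1norm c n) by (apply IH; lia). lra.
Qed.

Lemma pow_1plus_mul_le y n : 0 <= y -> (1 + y) ^ n * (1 - INR n * y) <= 1.
Proof.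
  intros Hy. induction n as [|n IH]; [simpl; lra|].
  rewrite S_INR. simpl.
  pose proof (pow_le (1 + y) n ltac:(lra)). pose proof (pos_INR n).
  assert (0 <= (1 + y) ^ n * ((INR n + 1) * y * y))
    by (apply Rmult_le_pos; [|apply Rmult_le_pos; [apply Rmult_le_pos|]]; lra).
  replace ((1 + y) * (1 + y) ^ n * (1 - (INR n + 1) * y))
    with ((1 + y) ^ n * (1 - INR n * y) - (1 + y) ^ n * ((INR n + 1) * y * y)) by ring.
  lra.
Qed.

Lemma pow_1plus_le y n : 0 <= y -> INR n * y <= 1 / 2 -> (1 + y) ^ n <= 1 + 2 * INR n * y.
Proof.
  intros Hy Hny. pose proof (pow_1plus_mul_le y n Hy). pose proof (pow_le (1 + y) n ltac:(lra)).
  replace (2 * INR n * y) with (2 * (INR n * y)) by ring.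
  set (t := INR n * y) in *.
  assert (0 <= t) by (apply Rmult_le_pos; [apply pos_INR|lra]).
  assert (0 <= t * (1 - 2 * t)) by (apply Rmult_le_pos; lra).
  apply Rmult_le_reg_r with (1 - t); [lra|]. lra.
Qed.

Lemma dilation_factor_le n delta M : 0 < delta -> delta <= 1 -> 0 < INR M ->
  4 * INR n ^ 2 / delta <= INR M -> (1 + 2 * (INR n / INR M)) ^ n <= 1 + delta.
Proof.
  intros Hd0 Hd1 HM0 HM.
  assert (H4 : 4 * INR n ^ 2 <= delta * INR M).
  { replace (4 * INR n ^ 2) with (delta * (4 * INR n ^ 2 / delta)) by (field; lra).
    apply Rmult_le_compat_l; lra. }
  replace (2 * INR n * (2 * (INR n / INR M))) with (4 * INR n ^ 2 / INR M) by (field; lra).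
  assert (Hq : 4 * INR n ^ 2 / INR M <= delta).
  { apply Rmult_le_reg_l with (INR M); [lra|].
    replace (INR M * (4 * INR n ^ 2 / INR M)) with (4 * INR n ^ 2) by (field; lra). lra. }
  eapply Rle_trans; [apply pow_1plus_le|].
  - apply Rmult_le_pos; [lra|]. apply Rdiv_le_0_compat; [apply pos_INR|lra].
  - replace (INR n * (2 * (INR n / INR M))) with (/ 2 * (4 * INR n ^ 2 / INR M)) by (field; lra). lra.
  - replace (2 * INR n * (2 * (INR n / INR M))) with (4 * INR n ^ 2 / INR M) by (field; lra). lra.
Qed.

Theorem mainTheorem18 (n : nat) (c : nat -> R) (r delta : R) :
  (forall i : nat, (1 <= i <= n)%nat -> 0 <= c i) ->
  0 < r -> r <= 1 ->
  l1norm c n <= r ->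
  0 < delta -> delta <= 1 ->
  let M := Z.to_nat (Rceil (4 * INR n ^ 2 / delta)) in
  Psi c n 1 r <= G c r M n 1 r /\ G c r M n 1 r <= (1 + delta) * Psi c n 1 r.
Proof.
  intros _ Hr0 Hr1 Hl Hd0 Hd1 M.
  destruct n as [|n']; [simpl; unfold Psi0; repeat destruct Rle_dec; lra|].
  set (n := S n') in *.
  assert (Hn : 1 <= INR n) by (apply (le_INR 1); unfold n; lia).
  assert (HM : 4 * INR n ^ 2 / delta <= INR M) by apply le_INR_Z_to_nat_Rceil.
  assert (HM0 : 0 < INR M) by (apply Rlt_le_trans with (4 * INR n ^ 2 / delta); [apply Rdiv_lt_0_compat; [apply Rmult_lt_0_compat; [lra|apply pow_lt; lra]|lra]|exact HM]).
  assert (Hc : forall i, (1 <= i <= n)%nat -> Rabs (c i) <= 2)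
    by (intros i Hi; pose proof (Rabs_le_l1norm c n i Hi); lra).
  split; [apply Psi_le_G; assumption|].
  set (e := INR n / INR M).
  assert (He : 0 <= e) by (apply Rdiv_le_0_compat; lra).
  eapply Rle_trans; [apply (G_le_Psi_shift c r M); assumption|].
  replace (1 + INR n / INR M) with ((1 + e) * 1) by (unfold e; ring).
  replace (r + INR n * r / INR M) with ((1 + e) * r) by (unfold e; field; lra).
  eapply Rle_trans; [apply Psi_scale_le; auto; lra|].
  apply Rmult_le_compat_r; [apply Psi_nonneg|].
  apply dilation_factor_le; assumption.
Qed.
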